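(* Let $\bm{H}\in\mathbb{R}^{n\times n}$ be symmetric positive definite, and let $$\mathbf{M}=\begin{bmatrix}(1+\beta)(\mathbf{I}_n-\eta\bm{H}) & \beta(-\mathbf{I}_n+\eta\bm{H})\\ \mathbf{I}_n & \mathbf{0}_n\end{bmatrix}\in\mathbb{R}^{2n\times 2n}.$$ Suppose $0<\eta\le 1/\lambda_{\max}(\bm{H})$ and $1>\beta\ge\frac{1-\sqrt{\eta\lambda_{\min}(\bm{H})}}{1+\sqrt{\eta\lambda_{\min}(\bm{H})}}$, and let $\mathbf{v}_t=\mathbf{M}\mathbf{v}_{t-1}$ for $t\le T$. Then for every $k\le T$, $$\|\mathbf{v}_k\|\le C\Big(\sqrt{\beta(1-\eta\lambda_{\min}(\bm{H}))}\Big)^k\|\mathbf{v}_0\|,\qquad C=\frac{2\beta(1-\eta\lambda_{\min}(\bm{H}))+2}{\sqrt{\min\{g(\beta,\eta\lambda_{\min}(\bm{H})),\,g(\beta,\eta\lambda_{\max}(\bm{H}))\}}},$$ where $g(x,y)=4x(1-y)-[(1+x)(1-y)]^2$.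
   Context: $\lambda_{\min}(\cdot)$, $\lambda_{\max}(\cdot)$ denote smallest and largest eigenvalues; $\|\cdot\|$ is the Euclidean norm; $\mathbf{I}_n$, $\mathbf{0}_n$ are the $n\times n$ identity and zero matrices. *)

From HB Require Import structures.
From mathcomp Require Import all_boot all_order all_algebra.
From mathcomp Require Import reals.
Set Implicit Arguments. Unset Strict Implicit. Unset Printing Implicit Defensive.
Import Order.TTheory GRing.Theory Num.Theory.
Local Open Scope ring_scope.

Definition vnorm (R : realType) (m : nat) (v : 'cV[R]_m) : R :=
  Num.sqrt (\sum_(i < m) v i 0 ^+ 2).

Definition symmetric_mx (R : realType) (n : nat) (H : 'M[R]_n) : Prop := H^T = H.

Definition posdef_mx (R : realType) (n : nat) (H : 'M[R]_n) : Prop :=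
  forall x : 'cV[R]_n, x != 0 -> 0 < (x^T *m H *m x) 0 0.

Definition is_lambda_min (R : realType) (n : nat) (H : 'M[R]_n) (l : R) : Prop :=
  eigenvalue H l /\ forall a, eigenvalue H a -> l <= a.

Definition is_lambda_max (R : realType) (n : nat) (H : 'M[R]_n) (l : R) : Prop :=
  eigenvalue H l /\ forall a, eigenvalue H a -> a <= l.

Definition Mmat (R : realType) (n : nat) (H : 'M[R]_n) (eta beta : R) : 'M[R]_(n + n) :=
  block_mx ((1 + beta) *: (1%:M - eta *: H)) (beta *: (- 1%:M + eta *: H))
           1%:M 0.

Definition gfun (R : realType) (x y : R) : R :=
  4 * x * (1 - y) - ((1 + x) * (1 - y)) ^+ 2.

From HB Require Import structures.
From mathcomp Require Import all_boot all_order all_algebra.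
From mathcomp Require Import reals.
From mathcomp Require Import complex spectral sesquilinear.
From mathcomp Require Import ring lra.
Set Implicit Arguments. Unset Strict Implicit. Unset Printing Implicit Defensive.
Import Order.TTheory GRing.Theory Num.Theory.
Local Open Scope ring_scope.

(* Diagonalising H = P^* diag(d) P (P unitary, d real: the spectral theorem
   for the Hermitian complexification of H) decouples the iteration into n
   independent complex two-term recurrences, one per eigenvalue d_i:
     z' = a_i z - b_i w,  w' = z,
   with a_i = (1 + beta)(1 - eta d_i) and b_i = beta (1 - eta d_i).
   Each such recurrence multiplies the quadratic form
     E(z, w) = z^2 - a_i z w + b_i w^2
   by b_i, and when 4 b_i - a_i^2 = g(beta, eta d_i) is positive, E is
   equivalent to the squared Euclidean norm.  This yields a decay b_i^k of
   each mode; b_i <= beta (1 - eta lmin), and concavity of g in its second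
   argument bounds g(beta, eta d_i) below by the minimum of its values at
   eta lmin and eta lmax.  Since P preserves the norm, summing the modes
   bounds |v_k|^2, and a square root gives the theorem. *)

Section TwoTermRecurrence.
Variable R : realFieldType.
Variables a b : R.

(* The quadratic form that the recurrence x' = a x - b y, y' = x rescales by b. *)
Definition hb_energy (x y : R) : R := x ^+ 2 - a * x * y + b * y ^+ 2.

Lemma hb_energy_step (x y : R) : hb_energy (a * x - b * y) x = b * hb_energy x y.
Proof. by rewrite /hb_energy; ring. Qed.

Lemma hb_energy_upper (x y : R) : a ^+ 2 <= 4 * b ->
  hb_energy x y <= (1 + b) * (x ^+ 2 + y ^+ 2).
Proof.
move=> disc_le; have : 0 <= (2 * y + a * x) ^+ 2 + (4 * b - a ^+ 2) * x ^+ 2.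
  by apply: addr_ge0; [exact: sqr_ge0 | apply: mulr_ge0; rewrite ?subr_ge0 ?sqr_ge0].
rewrite /hb_energy; nra.
Qed.

Lemma hb_energy_lower (x y : R) :
  (4 * b - a ^+ 2) * (x ^+ 2 + y ^+ 2) <= 4 * (1 + b) * hb_energy x y.
Proof.
have c_gt0 : 0 < 4 + a ^+ 2 by have := sqr_ge0 a; lra.
rewrite -subr_ge0 -(pmulr_rge0 _ c_gt0).
have -> : (4 + a ^+ 2) * (4 * (1 + b) * hb_energy x y - (4 * b - a ^+ 2) * (x ^+ 2 + y ^+ 2))
   = ((4 + a ^+ 2) * x - 2 * a * (1 + b) * y) ^+ 2 + ((a ^+ 2 - 4 * b) * y) ^+ 2.
  by rewrite /hb_energy; ring.
by rewrite addr_ge0 ?sqr_ge0.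
Qed.

Section Trajectory.
Variables (T : nat) (x y : nat -> R).
Hypothesis x_y_rec : forall t, (t < T)%N -> x t.+1 = a * x t - b * y t /\ y t.+1 = x t.

Lemma hb_energy_geometric k : (k <= T)%N ->
  hb_energy (x k) (y k) = b ^+ k * hb_energy (x 0%N) (y 0%N).
Proof.
elim: k => [|k IHk] lt_kT; first by rewrite expr0 mul1r.
have [-> ->] := x_y_rec lt_kT.
by rewrite hb_energy_step IHk ?(ltnW lt_kT) // exprS mulrA.
Qed.

Lemma two_term_decay (r G : R) : 0 <= b -> b <= r -> 0 <= G -> G <= 4 * b - a ^+ 2 ->
  forall k, (k <= T)%N ->
  (x k ^+ 2 + y k ^+ 2) * G <= 4 * (1 + r) ^+ 2 * r ^+ k * (x 0%N ^+ 2 + y 0%N ^+ 2).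
Proof.
move=> b_ge0 le_br G_ge0 le_G k le_kT.
have disc_le : a ^+ 2 <= 4 * b by lra.
have sum_ge0 t : 0 <= x t ^+ 2 + y t ^+ 2 by rewrite addr_ge0 ?sqr_ge0.
have bk_ge0 : 0 <= b ^+ k := exprn_ge0 k b_ge0.
have -> : 4 * (1 + r) ^+ 2 * r ^+ k * (x 0%N ^+ 2 + y 0%N ^+ 2)
    = 4 * (1 + r) * r ^+ k * ((1 + r) * (x 0%N ^+ 2 + y 0%N ^+ 2)) by ring.
apply: le_trans (_ : 4 * (1 + b) * b ^+ k * ((1 + b) * (x 0%N ^+ 2 + y 0%N ^+ 2)) <= _).
  rewrite (le_trans (ler_wpM2l (sum_ge0 k) le_G)) // mulrC.
  rewrite (le_trans (hb_energy_lower _ _)) // hb_energy_geometric // mulrA.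
  by rewrite ler_wpM2l ?hb_energy_upper // mulr_ge0 //; lra.
have le_bkrk : b ^+ k <= r ^+ k by rewrite lerXn2r ?nnegrE //; lra.
apply: ler_pM; rewrite ?mulr_ge0 ?ler_wpM2r ?ler_pM ?lerD2l //; lra.
Qed.

End Trajectory.

End TwoTermRecurrence.

Section ComplexModes.
Variable R : rcfType.
Local Open Scope complex_scope.
Local Open Scope sesquilinear_scope.

Definition sqmod (z : R[i]) : R := complex.Re z ^+ 2 + complex.Im z ^+ 2.

Lemma conj_mul_sqmod (z : R[i]) : Num.conj z * z = (sqmod z)%:C.
Proof.
case: z => x y; rewrite /conjc /sqmod /=.
by apply/eqP; rewrite eq_complex /=; apply/andP; split; apply/eqP; ring.
Qed.

Lemma sqmod_real (x : R) : sqmod x%:C = x ^+ 2.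
Proof. by rewrite /sqmod /= expr0n addr0. Qed.

(* The decay bound for complex trajectories with real coefficients follows by
   applying the real one to the real and imaginary parts. *)
Lemma complex_two_term_decay (a b r G : R) (T : nat) (z w : nat -> R[i]) :
  0 <= b -> b <= r -> 0 <= G -> G <= 4 * b - a ^+ 2 ->
  (forall t, (t < T)%N -> z t.+1 = a%:C * z t - b%:C * w t /\ w t.+1 = z t) ->
  forall k, (k <= T)%N ->
  (sqmod (z k) + sqmod (w k)) * G
    <= 4 * (1 + r) ^+ 2 * r ^+ k * (sqmod (z 0%N) + sqmod (w 0%N)).
Proof.
move=> b_ge0 le_br G_ge0 le_G z_w_rec k le_kT.
have part_rec (f : R[i] -> R) : f = @complex.Re R \/ f = @complex.Im R ->
    forall t, (t < T)%N -> f (z t.+1) = a * f (z t) - b * f (w t) /\ f (w t.+1) = f (z t).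
  move=> f_ReIm t lt_tT; have [-> ->] := z_w_rec _ lt_tT.
  by case: (z t) (w t) => [x1 y1] [x2 y2]; case: f_ReIm => -> /=; split; ring.
have decRe := two_term_decay (part_rec _ (or_introl erefl)) b_ge0 le_br G_ge0 le_G le_kT.
have decIm := two_term_decay (part_rec _ (or_intror erefl)) b_ge0 le_br G_ge0 le_G le_kT.
have -> : (sqmod (z k) + sqmod (w k)) * G
    = (complex.Re (z k) ^+ 2 + complex.Re (w k) ^+ 2) * G + (complex.Im (z k) ^+ 2 + complex.Im (w k) ^+ 2) * G.
  by rewrite /sqmod; ring.
have -> : 4 * (1 + r) ^+ 2 * r ^+ k * (sqmod (z 0%N) + sqmod (w 0%N))
    = 4 * (1 + r) ^+ 2 * r ^+ k * (complex.Re (z 0%N) ^+ 2 + complex.Re (w 0%N) ^+ 2)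
    + 4 * (1 + r) ^+ 2 * r ^+ k * (complex.Im (z 0%N) ^+ 2 + complex.Im (w 0%N) ^+ 2).
  by rewrite /sqmod; ring.
exact: lerD.
Qed.

Lemma cV_sqnormE (n : nat) (Z : 'cV[R[i]]_n) :
  (Z^t* *m Z) 0 0 = (\sum_i sqmod (Z i 0))%:C.
Proof. by rewrite mxE rmorph_sum; apply: eq_bigr => i _; rewrite !mxE conj_mul_sqmod. Qed.

Lemma unitary_sumsq (n : nat) (P : 'M[R[i]]_n) (u : 'cV[R]_n) :
  P \is unitarymx ->
  \sum_i u i 0 ^+ 2 = \sum_i sqmod ((P *m map_mx (real_complex R) u) i 0).
Proof.
move=> P_unitary; apply: (@complexI R); rewrite -!cV_sqnormE.
set U := map_mx (real_complex R) u.
have PtP : P^t* *m P = 1%:M by rewrite -[P^t*]mul1mx mulmxKtV.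
rewrite trmx_mul map_mxM -mulmxA (mulmxA (P^t*)) PtP mul1mx.
by rewrite mxE rmorph_sum; apply: eq_bigr => i _; rewrite !mxE conj_mul_sqmod sqmod_real.
Qed.

End ComplexModes.

Section RealSymmetric.
Variables (R : realType) (n : nat).
Local Notation C := (real_complex R).

(* Spectral theorem for a real symmetric matrix, via its Hermitian
   complexification: P H = diag(d) P with P unitary and each d_i a (real)
   eigenvalue of H. *)
Lemma real_symmetric_spectral (H : 'M[R]_n) : symmetric_mx H ->
  exists (P : 'M[R[i]]_n) (d : 'rV[R]_n),
    [/\ P \is unitarymx,
        P *m map_mx C H = diag_mx (map_mx C d) *m P &
        forall i, eigenvalue H (d 0 i)].
Proof.
move=> H_sym; set Hc := map_mx C H.
have Hc_herm : Hc \is hermsymmx.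
  apply: realsym_hermsym.
    by apply/is_hermitianmxP; rewrite expr0 scale1r map_mx_id // /Hc map_trmx H_sym.
  by apply/mxOverP => i j; rewrite mxE; apply/complex_realP; exists (H i j).
have /orthomx_spectralP Hc_diag := hermitian_normalmx Hc_herm.
set P := spectralmx Hc in Hc_diag; set sp := spectral_diag Hc in Hc_diag.
have P_unit : P \in unitmx by exact: spectral_unit.
have sp_real i : sp 0 i \is Num.real.
  by move/mxOverP: (hermitian_spectral_diag_real Hc_herm); apply.
have PHc : P *m Hc = diag_mx sp *m P by rewrite Hc_diag !mulmxA mulmxV // mul1mx.
exists P, (map_mx (@complex.Re R) sp).
have -> : map_mx C (map_mx (@complex.Re R) sp) = sp.
  by apply/matrixP => i j; rewrite !mxE RRe_real // ord1 sp_real.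
split => // [|i]; first exact: spectral_unitarymx.
rewrite eigenvalue_root_char -(fmorph_root C) map_char_poly -/Hc.
rewrite -eigenvalue_root_char mxE -[X in eigenvalue _ X]/(C (complex.Re (sp 0 i))) RRe_real //.
apply/eigenvalueP; exists (row i P).
  by rewrite -row_mul PHc mul_diag_mx; apply/rowP => j; rewrite !mxE.
apply: contraTneq isT => Pi0.
have /rowP/(_ i) := congr1 (row i) (mulmxV P_unit).
by rewrite row_mul Pi0 mul0mx !mxE eqxx => /eqP; rewrite eq_sym oner_eq0.
Qed.

(* Eigenvalues of a positive definite matrix are positive (tested on a left
   eigenvector u, for which u H u^T = a * |u|^2). *)
Lemma posdef_eigenvalue_gt0 (H : 'M[R]_n) (a : R) :
  posdef_mx H -> eigenvalue H a -> 0 < a.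
Proof.
move=> H_pd /eigenvalueP [u uH u_neq0].
have uu_gt0 : 0 < (u *m u^T) 0 0.
  have sq_ge0 j : 0 <= u 0 j * u^T j 0 by rewrite mxE -expr2 sqr_ge0.
  rewrite mxE lt_def sumr_ge0 // andbT psumr_neq0 //.
  have [j uj_neq0] : exists j, u 0 j != 0.
    by apply/existsP; apply: contraNT u_neq0 => /existsPn u0; apply/eqP/rowP => j; rewrite mxE; apply/eqP/negPn.
  by apply/hasP; exists j; rewrite ?mem_index_enum // mxE -expr2 lt_def sqr_ge0 sqrf_eq0 uj_neq0.
have := H_pd u^T; rewrite trmx_eq0 trmxK uH -scalemxAl mxE => /(_ u_neq0).
by rewrite pmulr_lgt0.
Qed.

End RealSymmetric.

(* The spectral gap function g(x, .) is concave, so on an interval it is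
   bounded below by its values at the endpoints. *)
Lemma gfun_ge_min (R : realType) (x y1 y y2 : R) : y1 <= y -> y <= y2 ->
  Num.min (gfun x y1) (gfun x y2) <= gfun x y.
Proof.
move=> le_y1y le_yy2.
have [eq_y1y2|ne_y1y2] := eqVneq y1 y2.
  have -> : y = y1 by lra.
  by rewrite -eq_y1y2 ge_min lexx.
have y21_gt0 : 0 < y2 - y1 by rewrite subr_gt0 lt_neqAle ne_y1y2 (le_trans le_y1y).
have chord : (y2 - y) * gfun x y1 + (y - y1) * gfun x y2 <= (y2 - y1) * gfun x y.
  rewrite -subr_ge0.
  have -> : (y2 - y1) * gfun x y - ((y2 - y) * gfun x y1 + (y - y1) * gfun x y2)
      = (y2 - y1) * ((1 + x) ^+ 2 * ((y - y1) * (y2 - y))) by rewrite /gfun; ring.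
  by apply: mulr_ge0; [lra | apply: mulr_ge0; [exact: sqr_ge0 | apply: mulr_ge0; lra]].
rewrite -(ler_pM2l y21_gt0) (le_trans _ chord) //.
set m := Num.min _ _.
have le_m1 : (y2 - y) * m <= (y2 - y) * gfun x y1 by rewrite ler_wpM2l ?subr_ge0 ?ge_min ?lexx.
have le_m2 : (y - y1) * m <= (y - y1) * gfun x y2 by rewrite ler_wpM2l ?subr_ge0 ?ge_min ?lexx ?orbT.
lra.
Qed.

Definition sumsq (R : realType) (m : nat) (w : 'cV[R]_m) : R := \sum_i w i 0 ^+ 2.

Lemma sumsq_ge0 (R : realType) (m : nat) (w : 'cV[R]_m) : 0 <= sumsq w.
Proof. by apply: sumr_ge0 => i _; exact: sqr_ge0. Qed.

Lemma vnorm_sumsq (R : realType) (m : nat) (w : 'cV[R]_m) : vnorm w = Num.sqrt (sumsq w).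
Proof. by []. Qed.

Section HeavyBallModes.
Variables (R : realType) (n : nat) (H : 'M[R]_n) (P : 'M[R[i]]_n) (d : 'rV[R]_n).
Local Notation C := (real_complex R).
Hypothesis P_diag : P *m map_mx C H = diag_mx (map_mx C d) *m P.

Definition mode (u : 'cV[R]_n) (i : 'I_n) : R[i] := (P *m map_mx C u) i 0.

Lemma mode_affine_step (al ga : R) (u : 'cV[R]_n) i :
  mode ((al *: (1%:M - ga *: H)) *m u) i = C (al * (1 - ga * d 0 i)) * mode u i.
Proof.
rewrite /mode map_mxM map_mxZ map_mxB map_mx1 map_mxZ.
rewrite mulmxA -scalemxAr mulmxBr mulmx1 -scalemxAr P_diag.
rewrite -scalemxAl mulmxBl -scalemxAl -mulmxA mul_diag_mx !mxE.
by rewrite rmorphM rmorphB rmorph1 rmorphM /=; ring.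
Qed.

Lemma heavy_ball_mode_step (eta beta : R) (w : 'cV[R]_(n + n)) i :
  mode (usubmx (Mmat H eta beta *m w)) i
    = C ((1 + beta) * (1 - eta * d 0 i)) * mode (usubmx w) i
      - C (beta * (1 - eta * d 0 i)) * mode (dsubmx w) i
  /\ mode (dsubmx (Mmat H eta beta *m w)) i = mode (usubmx w) i.
Proof.
rewrite -[w in Mmat _ _ _ *m w]vsubmxK /Mmat mul_block_col col_mxKu col_mxKd.
rewrite mul1mx mul0mx addr0; split => //.
have -> : beta *: (- 1%:M + eta *: H) = (- beta) *: (1%:M - eta *: H) :> 'M[R]_n.
  by rewrite scaleNr -scalerN opprB addrC.
rewrite /mode map_mxD mulmxDr mxE -!/(mode _ i) !mode_affine_step.
by rewrite mulNr rmorphN mulNr.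
Qed.

Lemma sumsq_modes (w : 'cV[R]_(n + n)) : P \is unitarymx ->
  sumsq w = \sum_i (sqmod (mode (usubmx w) i) + sqmod (mode (dsubmx w) i)).
Proof.
move=> P_unitary; rewrite big_split /= -!unitary_sumsq // /sumsq big_split_ord /=.
by congr (_ + _); apply: eq_bigr => i _; rewrite mxE.
Qed.

Lemma heavy_ball_sumsq_decay (eta beta lo hi G : R) (T : nat) (v : nat -> 'cV[R]_(n + n)) :
  P \is unitarymx -> 0 <= beta ->
  (forall i, lo <= eta * d 0 i <= hi) -> hi <= 1 ->
  0 <= G -> G <= Num.min (gfun beta lo) (gfun beta hi) ->
  (forall t, (t < T)%N -> v t.+1 = Mmat H eta beta *m v t) ->
  forall k, (k <= T)%N ->
  sumsq (v k) * G
    <= 4 * (1 + beta * (1 - lo)) ^+ 2 * (beta * (1 - lo)) ^+ k * sumsq (v 0%N).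
Proof.
move=> P_unitary beta_ge0 d_range hi_le1 G_ge0 G_le v_rec k le_kT.
rewrite !sumsq_modes // mulr_suml mulr_sumr; apply: ler_sum => i _.
have /andP [lo_le hi_ge] := d_range i.
apply: (complex_two_term_decay (a := (1 + beta) * (1 - eta * d 0 i))
                               (b := beta * (1 - eta * d 0 i)) (T := T)
                               (z := fun t => mode (usubmx (v t)) i)
                               (w := fun t => mode (dsubmx (v t)) i)) => //.
- by rewrite mulr_ge0 //; lra.
- by rewrite ler_wpM2l //; lra.
- have -> : 4 * (beta * (1 - eta * d 0 i)) - ((1 + beta) * (1 - eta * d 0 i)) ^+ 2
      = gfun beta (eta * d 0 i) by rewrite /gfun; ring.
  exact: le_trans G_le (gfun_ge_min _ lo_le hi_ge).
- by move=> t lt_tT; rewrite /= v_rec //; exact: heavy_ball_mode_step.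
Qed.

End HeavyBallModes.

Lemma momentum_threshold_ge0 (R : rcfType) (s : R) : 0 <= s <= 1 ->
  0 <= (1 - Num.sqrt s) / (1 + Num.sqrt s).
Proof.
move=> /andP [s_ge0 s_le1].
have sqrt_le1 : Num.sqrt s <= 1 by rewrite -sqrtr1 ler_wsqrtr.
by apply: divr_ge0; have := sqrtr_ge0 s; lra.
Qed.

Lemma sqrt_decay_bound (R : rcfType) (Sk S0 G rho : R) (k : nat) :
  0 <= Sk -> 0 <= rho -> Sk * G <= 4 * (1 + rho) ^+ 2 * rho ^+ k * S0 ->
  Num.sqrt Sk * Num.sqrt G <= (2 * rho + 2) * Num.sqrt rho ^+ k * Num.sqrt S0.
Proof.
move=> Sk_ge0 rho_ge0 le_SG.
have c_ge0 : 0 <= (2 * rho + 2) * Num.sqrt rho ^+ k.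
  by rewrite mulr_ge0 ?exprn_ge0 ?sqrtr_ge0 //; lra.
rewrite -sqrtrM // (le_trans (ler_wsqrtr le_SG)) //.
have -> : 4 * (1 + rho) ^+ 2 * rho ^+ k * S0
    = ((2 * rho + 2) * Num.sqrt rho ^+ k) ^+ 2 * S0.
  by rewrite exprMn -exprM mulnC exprM sqr_sqrtr //; ring.
by rewrite sqrtrM ?sqr_ge0 // sqrtr_sqr ger0_norm.
Qed.

Theorem lemma2 (R : realType) (n : nat) (H : 'M[R]_n) (lmin lmax eta beta : R)
  (T : nat) (v : nat -> 'cV[R]_(n + n)) :
  symmetric_mx H -> posdef_mx H ->
  is_lambda_min H lmin -> is_lambda_max H lmax ->
  0 < eta -> eta <= lmax^-1 ->
  beta < 1 ->
  (1 - Num.sqrt (eta * lmin)) / (1 + Num.sqrt (eta * lmin)) <= beta ->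
  (forall t, (1 <= t <= T)%N -> v t = Mmat H eta beta *m v t.-1) ->
  forall k, (k <= T)%N ->
    vnorm (v k) * Num.sqrt (Num.min (gfun beta (eta * lmin)) (gfun beta (eta * lmax)))
    <= (2 * beta * (1 - eta * lmin) + 2)
       * Num.sqrt (beta * (1 - eta * lmin)) ^+ k * vnorm (v 0%N).
Proof.
(* The bound holds without the hypothesis beta < 1. *)
move=> H_sym H_pd [lmin_eig lmin_le] [lmax_eig lmax_ge] eta_gt0 eta_le _ beta_ge v_rec k le_kT.
rewrite -[2 * beta * _]mulrA !vnorm_sumsq.
have lmin_gt0 := posdef_eigenvalue_gt0 H_pd lmin_eig.
have lmax_gt0 := posdef_eigenvalue_gt0 H_pd lmax_eig.
have eta_range a : eigenvalue H a -> eta * lmin <= eta * a <= eta * lmax.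
  by move=> a_eig; rewrite !ler_pM2l // lmin_le ?lmax_ge.
have eta_lmax_le1 : eta * lmax <= 1.
  by have := ler_wpM2r (ltW lmax_gt0) eta_le; rewrite mulVf ?gt_eqF.
have eta_lmin_ge0 : 0 <= eta * lmin by rewrite mulr_ge0 ?ltW.
have beta_ge0 : 0 <= beta.
  apply: le_trans beta_ge; apply: momentum_threshold_ge0.
  by rewrite eta_lmin_ge0 /=; have /andP [] := eta_range _ lmax_eig; lra.
have [P [d [P_unitary P_diag d_eig]]] := real_symmetric_spectral H_sym.
set G := Num.min _ _; set rho := beta * (1 - eta * lmin).
have rho_ge0 : 0 <= rho by rewrite mulr_ge0 //; have /andP [] := eta_range _ lmax_eig; lra.
have [G_le0 | G_gt0] := lerP G 0.
  by rewrite (ler0_sqrtr G_le0) mulr0 !mulr_ge0 ?exprn_ge0 ?sqrtr_ge0 //; lra.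
apply: sqrt_decay_bound; rewrite ?sumsq_ge0 //.
apply: (heavy_ball_sumsq_decay P_diag (eta := eta) (hi := eta * lmax) (T := T)) => //.
- by move=> i; exact: eta_range.
- exact: ltW.
- by move=> t lt_tT; apply: v_rec.
Qed.
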